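(* Under the standing assumptions: (i) $\Lambda=\operatorname{epi}(f-\operatorname{eco}g+\delta_A)^c$; (ii) $\Omega=\bigcup_{(x^*,y^*,\alpha)\in\operatorname{dom}\delta_A^c}\operatorname{epi}\big(f-\operatorname{eco}g-c(\cdot,(-x^*,-y^*,\alpha))-\delta_A^c(x^*,y^*,\alpha)\big)^c$.
   Context: Let $X$ be a nontrivial separated locally convex space with topological dual $X^*$, endowed with the topology $\sigma(X,X^* )$; $\langle x,x^*\rangle$ is the value of $x^*\in X^*$ at $x\in X$. Put $W:=X^*\times X^*\times\mathbb{R}$. For $y^*\in X^*$, $\alpha\in\mathbb{R}$, let $H^-_{y^*,\alpha}:=\{x\in X:\langle x,y^*\rangle<\alpha\}$. The coupling function $c:X\times W\to\overline{\mathbb{R}}$ is $c(x,(x^*,y^*,\alpha)):=\langle x,x^*\rangle$ if $\langle x,y^*\rangle<\alpha$ and $:=+\infty$ otherwise. For $h:X\to\overline{\mathbb{R}}$ its $c$-conjugate is $h^c:W\to\overline{\mathbb{R}}$, $h^c(w):=\sup_{x\in X}\{c(x,w)-h(x)\}$, with the convention $(+\infty)+(-\infty)=(-\infty)+(+\infty)=(+\infty)-(+\infty)=(-\infty)-(-\infty)=-\infty$. Epigraphs of functions on $W$ are subsets of $W\times\mathbb{R}$. $\delta_A$ is the indicator function of $A$. For $E\subseteq W\times\mathbb{R}$ and $e\in W\times\mathbb{R}$, $E-e:=\{z-e:z\in E\}$. A set $C\subseteq X\times\mathbb{R}$ is e-convex if for every point $p\notin C$ there is a continuous linear functional $\ell$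 on $X\times\mathbb{R}$ with $\ell(q-p)<0$ for all $q\in C$; a function is e-convex if its epigraph is e-convex, and $\operatorname{eco}g$ is the largest e-convex minorant of $g$ (it equals $\sup_{(u^*,v^*,\gamma)\in\operatorname{dom}g^c}\{c(\cdot,(u^*,v^*,\gamma))-g^c(u^*,v^*,\gamma)\}$ when $g$ has a proper e-convex minorant). Standing assumptions: $f,g:X\to\overline{\mathbb{R}}$ proper convex with $\operatorname{dom}f\subseteq\operatorname{dom}g$, $A\subseteq X$ nonempty, convention $(+\infty)-(+\infty)=+\infty$ in differences $f-g$, $f-\operatorname{eco}g$. Sets: $\Lambda:=\bigcap_{(u^*,v^*,\gamma)\in\operatorname{dom}g^c}\Big[\operatorname{epi}(f+\delta_A)^c-\big(u^*,0,0,g^c(u^*,v^*,\gamma)\big)\Big]$, $\Omega:=\bigcup_{(x^*,y^*,\alpha)\in\operatorname{dom}\delta_A^c}\ \bigcap_{(u^*,v^*,\gamma)\in\operatorname{dom}g^c}\Big[\operatorname{epi}\big(f-c(\cdot,(-x^*,-y^*,\alpha))\big)^c-\big(u^*,0,0,g^c(u^*,v^*,\gamma)-\delta_A^c(x^*,y^*,\alpha)\big)\Big]$. *)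

From mathcomp Require Import all_boot all_algebra.
From mathcomp Require Import all_classical all_reals all_analysis.
Import GRing.Theory Num.Theory numFieldNormedType.Exports.

Set Implicit Arguments.
Unset Strict Implicit.
Unset Printing Implicit Defensive.

Local Open Scope classical_set_scope.
Local Open Scope ring_scope.

Section EvenConvexity.
Context {R : realType} {X : tvsType R}.

(* X^* : the topological dual of X, i.e. continuous linear functionals.
   Elements of X^* are represented by their underlying functions X -> R. *)
Definition is_dual (xs : X -> R) : Prop :=
  (forall (a : R) (x y : X), xs (a *: x + y) = a * xs x + xs y) /\ continuous xs.

(* W := X^* x X^* x R, carried by (X -> R) * (X -> R) * R and cut out by inW *)
Definition W := ((X -> R) * (X -> R) * R)%type.
Definition inW (w : W) : Prop := is_dual w.1.1 /\ is_dual w.1.2.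

Definition coupling (x : X) (w : W) : \bar R :=
  if w.1.2 x < w.2 then (w.1.1 x)%:E else +oo%E.

(* c-conjugate, with the (standard mathcomp) convention
   (+oo)+(-oo) = (+oo)-(+oo) = (-oo)-(-oo) = -oo *)
Definition cconj (h : X -> \bar R) (w : W) : \bar R :=
  ereal_sup (range (fun x => (coupling x w - h x)%E)).

Definition epiW (k : W -> \bar R) : set (W * R) :=
  [set p | inW p.1 /\ (k p.1 <= p.2%:E)%E].

Definition domW (k : W -> \bar R) : set W :=
  [set w | inW w /\ (k w < +oo)%E].

Definition translate (E : set (W * R)) (e : W * R) : set (W * R) :=
  [set z - e | z in E].

Definition deltaI (A : set X) (x : X) : \bar R :=
  if `[< A x >] then 0%E else +oo%E.

Definition epiX (h : X -> \bar R) : set (X * R) :=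
  [set p | (h p.1 <= p.2%:E)%E].

Definition econvex_set (C : set (X * R)) : Prop :=
  forall p : X * R, ~ C p ->
    exists l : X * R -> R,
      (forall (a : R) (u v : X * R), l (a *: u + v) = a * l u + l v) /\
      continuous l /\
      (forall q, C q -> l (q - p) < 0).

Definition econvex_fun (h : X -> \bar R) : Prop := econvex_set (epiX h).

(* eco g : the largest e-convex minorant of g (pointwise supremum of all
   e-convex minorants, which is itself e-convex) *)
Definition eco (g : X -> \bar R) (x : X) : \bar R :=
  ereal_sup [set h x | h in [set h : X -> \bar R |
                                econvex_fun h /\ forall y, (h y <= g y)%E]].

Definition proper_fun (f : X -> \bar R) : Prop :=
  (exists x, (f x < +oo)%E) /\ (forall x, (-oo < f x)%E).

Definition convex_fun (f : X -> \bar R) : Prop :=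
  forall (x y : X) (a b t : R), 0 <= t <= 1 ->
    (f x <= a%:E)%E -> (f y <= b%:E)%E ->
    (f (t *: x + (1 - t) *: y)%R <= (t * a + (1 - t) * b)%:E)%E.

(* difference with the convention (+oo) - (+oo) = +oo (dual ereal subtraction) *)
Definition diff_pinfty (f g : X -> \bar R) (x : X) : \bar R :=
  (f x - g x)%dE.

Definition Lambda (f g : X -> \bar R) (A : set X) : set (W * R) :=
  [set p | inW p.1 /\
    forall u : W, domW (cconj g) u ->
      translate (epiW (cconj (fun x => f x + deltaI A x)%E))
                ((u.1.1, 0, 0), fine (cconj g u)) p].

Definition Omega (f g : X -> \bar R) (A : set X) : set (W * R) :=
  [set p | inW p.1 /\
    exists w : W, domW (cconj (deltaI A)) w /\
      forall u : W, domW (cconj g) u ->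
        translate
          (epiW (cconj (fun x => f x - coupling x ((- w.1.1, - w.1.2, w.2)%R))%E))
          ((u.1.1, 0, 0), fine (cconj g u - cconj (deltaI A) w)%E) p].

Definition Omega_rhs (f g : X -> \bar R) (A : set X) : set (W * R) :=
  [set p | exists w : W, domW (cconj (deltaI A)) w /\
      epiW (cconj (fun x => diff_pinfty f (eco g) x
                       - coupling x ((- w.1.1, - w.1.2, w.2)%R)
                       - cconj (deltaI A) w)%E) p].

End EvenConvexity.

From mathcomp Require Import all_boot all_order all_algebra.
From mathcomp Require Import all_classical all_reals all_analysis.
From mathcomp Require Import ring lra.
Import Order.TTheory GRing.Theory Num.Theory numFieldNormedType.Exports.

Set Implicit Arguments.
Unset Strict Implicit.
Unset Printing Implicit Defensive.

Local Open Scope classical_set_scope.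
Local Open Scope ring_scope.

(* On dom g the e-convex hull is the supremum of the elementary minorants:
   eco g x = sup { c(x,u) - g^c(u) : u in dom g^c }.  Each c(.,u) - g^c(u) is an
   e-convex minorant of g; conversely, if an e-convex minorant h of g exceeds r
   at x, the functional separating (x,r) from epi h is non-vertical, and after
   normalisation it gives u = (a*,0,1) with c(x,u) - g^c(u) >= r.
   A point ((x*,y*,a),t) lies in Lambda iff, for every x and every u in dom g^c,
   c(x,(x*,y*,a)) + u*(x) - (f + delta_A)(x) <= t + g^c(u); taking the supremum
   over u turns this into c(x,(x*,y*,a)) - (f - eco g + delta_A)(x) <= t, i.e.
   membership in the epigraph of the conjugate.  The same computation, done for
   each fixed w in dom delta_A^c, gives Omega; when dom g^c is empty,
   f - eco g = +oo and both sides of (ii) are the whole of W x R. *)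

Section LinearEquation.
Context {R : numDomainType} {V : lmodType R} {l : V -> R}.
Hypothesis lin : forall (a : R) (u v : V), l (a *: u + v) = a * l u + l v.

Lemma lin0 : l 0 = 0.
Proof.
have := lin 1 0 0; rewrite scale1r addr0 mul1r -{1}[l 0]addr0 => /addrI.
by move/esym.
Qed.

Lemma linD u v : l (u + v) = l u + l v.
Proof. by rewrite -[u]scale1r lin mul1r scale1r. Qed.

Lemma linZ a u : l (a *: u) = a * l u.
Proof. by rewrite -[a *: u]addr0 lin lin0 addr0. Qed.

Lemma linB u v : l (u - v) = l u - l v.
Proof. by rewrite -scaleN1r addrC lin mulN1r addrC. Qed.
End LinearEquation.

Section SupDualSub.
Context {R : realType} {T : Type} (D : set T) (phi kappa : T -> R) (E : \bar R).
Hypothesis E_le : forall s, (E <= s)%E <-> forall u, D u -> ((phi u - kappa u)%:E <= s)%E.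

Lemma sup_dsub_le (C : \bar R) (r t : R) : C != -oo%E ->
  (forall u, D u -> (C + (phi u)%:E - r%:E <= (t + kappa u)%:E)%E) <->
  (C - (r%:E - E)%dE <= t%:E)%E.
Proof.
case: C => [c| |] // _.
  transitivity (E <= (t - c + r)%:E)%E.
    rewrite E_le; split=> H u Du; have := H u Du; rewrite !lee_fin; lra.
  by case: E => [e| |] //=; rewrite ?lee_fin ?leNye //; split; lra.
transitivity (E <= -oo)%E.
  rewrite E_le; split=> H u Du; have := H u Du => /=.
    by rewrite leNgt ltry.
  by rewrite leeNy_eq.
by case: E => [e| |] //=; rewrite ?leNye.
Qed.
End SupDualSub.

Section CouplingConjugate.
Context {R : realType} {X : tvsType R}.
Local Notation W := (W (R:=R) (X:=X)).
Implicit Types (h : X -> \bar R) (w : W) (x : X).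

Lemma is_dual0 : is_dual (0 : X -> R).
Proof. by split=> [a x y|x]; [rewrite /= mulr0 addr0 | exact: cvg_cst]. Qed.

Lemma is_dualD (a b : X -> R) : is_dual a -> is_dual b -> is_dual (a + b).
Proof.
move=> [la ca] [lb cb]; have addE z : (a + b) z = a z + b z by [].
split=> [t x y|x]; first by rewrite !addE la lb; ring.
exact: continuousD (ca x) (cb x).
Qed.

Lemma continuous_fst_comp (u : X -> R) :
  continuous u -> continuous (fun q : X * R => u q.1).
Proof. by move=> cu q; apply: (@continuous_comp _ _ _ fst); [exact: cvg_fst | exact: cu]. Qed.

Lemma coupling_neqNy x w : coupling x w != -oo%E.
Proof. by rewrite /coupling; case: ifP. Qed.

Lemma coupling_addl x (a b v : X -> R) (al : R) :
  coupling x ((a + v)%R, b, al) = (coupling x (a, b, al) + (v x)%:E)%E.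
Proof. by rewrite /coupling /=; case: ifP. Qed.

Lemma cconj_ub h w x : (coupling x w - h x <= cconj h w)%E.
Proof. by apply: ereal_sup_ubound; exists x. Qed.

Lemma cconj_le h w t :
  (cconj h w <= t)%E <-> forall x, (coupling x w - h x <= t)%E.
Proof.
split=> [le x|H]; first exact: le_trans (cconj_ub h w x) le.
by apply: ge_ereal_sup => _ [x _ <-].
Qed.

Lemma translateP (E : set (W * R)) e p : translate E e p <-> E (p + e).
Proof.
split=> [[z Ez <-]|Epe]; first by rewrite subrK.
by exists (p + e); rewrite ?addrK.
Qed.

Lemma translate_epiW_cconj h (a b v : X -> R) (al t k : R) :
  inW (a, b, al) -> is_dual v ->
  translate (epiW (cconj h)) ((v, 0, 0), k) ((a, b, al), t) <->
  forall x, (coupling x (a, b, al) + (v x)%:E - h x <= (t + k)%:E)%E.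
Proof.
move=> [da db] dv; rewrite translateP /epiW /=.
have -> : ((a, b, al) + (v, 0, 0) : W) = ((a + v)%R, b + 0, al + 0) by [].
rewrite !addr0.
split=> [[_ /cconj_le H] x|H]; first by rewrite -coupling_addl.
split; first by split; [exact: is_dualD|].
by apply/cconj_le => x; rewrite coupling_addl.
Qed.

Lemma econvex_coupling_sub w (c : R) : inW w ->
  econvex_fun (fun z => coupling z w - c%:E)%E.
Proof.
move=> [[l1 cl1] [l2 cl2]] [z s]; rewrite /epiX /= => notin.
have epiP q : (coupling q.1 w - c%:E <= q.2%:E)%E ->
    w.1.2 q.1 < w.2 /\ w.1.1 q.1 - c <= q.2.
  by rewrite /coupling; case: ifP.
have [zw|zw] := ltrP (w.1.2 z) w.2.
- exists (fun q => w.1.1 q.1 - q.2); split; last split.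
  + move=> a p q /=; rewrite l1; change (a *: p.2) with (a * p.2); ring.
  + move=> q; have := @continuousB _ _ _ (fun q : X * R => w.1.1 q.1) snd q.
    by apply; [exact: continuous_fst_comp | exact: cvg_snd].
  + move: notin; rewrite /coupling zw lee_fin => notin q /epiP[_].
    rewrite /= (linB l1); lra.
- exists (fun q => w.1.2 q.1); split; last split.
  + by move=> a p q /=; rewrite l2.
  + exact: continuous_fst_comp.
  + by move=> q /epiP[+ _]; rewrite /= (linB l2); lra.
Qed.

Lemma econvex_nonvertical_sep h x (y r : R) :
  econvex_fun h -> h x = y%:E -> r < y ->
  exists a : X -> R, is_dual a /\
    forall z (s : R), (h z <= s%:E)%E -> a z - s < a x - r.
Proof.
move=> hE hx ry.
have notin : ~ epiX h (x, r) by rewrite /epiX /= hx lee_fin; lra.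
have [l [lin [cl sepl]]] := hE _ notin.
pose L z := l (z, 0); pose B := - l (0, 1).
have sepL z s : (h z <= s%:E)%E -> L z - L x < (s - r) * B.
  move=> /(sepl (z, s)).
  have -> : (z, s) - (x, r) = (z, 0) - (x, 0) + (s - r) *: (0, 1).
    apply: injective_projections => /=; first by rewrite scaler0 addr0.
    by rewrite subr0 add0r; exact: (esym (mulr1 _)).
  rewrite (linD lin) (linB lin) (linZ lin) /L /B; lra.
(* (x, y) lies in epi h above (x, r): the separating functional is non-vertical. *)
have B_gt0 : 0 < B.
  by have := sepL x y; rewrite hx lexx subrr => /(_ isT); rewrite pmulr_rgt0 // subr_gt0.
have L_lin a u v : L (a *: u + v) = a * L u + L v.
  rewrite /L; have -> : (a *: u + v, 0) = a *: (u, 0) + (v, 0 : R).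
    by apply: injective_projections => //=; rewrite addr0; exact: (esym (mulr0 _)).
  exact: lin.
exists (fun z => L z / B); split.
  split=> [a u v|z]; first by rewrite L_lin mulrDl mulrA.
  have cL : {for z, continuous L}.
    apply: (@continuous_comp _ _ _ (fun z : X => (z, 0 : R)) l z); last exact: cl.
    exact: (@cvg_pair _ _ _ _ _ _ _ _ _ id (fun=> 0) cvg_id (cvg_cst _)).
  exact: (@continuousM _ _ L (fun=> B^-1) z cL (cvg_cst _)).
move=> z s /sepL; rewrite -ltr_pdivrMr // mulrBl; lra.
Qed.

Lemma cconj_deltaI_fin_num A w : A !=set0 -> domW (cconj (deltaI A)) w ->
  cconj (deltaI A) w \is a fin_num.
Proof.
move=> [x Ax] [_ lt]; rewrite fin_numE (lt_eqF lt) andbT.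
have := cconj_ub (deltaI A) w x; rewrite /deltaI asboolT // sube0.
by apply: contraTneq => ->; rewrite leeNy_eq coupling_neqNy.
Qed.

Lemma domW_cconj_deltaI A : domW (cconj (deltaI A)) ((0, 0, 1) : W).
Proof.
split; first by split; exact: is_dual0.
apply: (@le_lt_trans _ _ 0%E); last exact: ltry.
apply/cconj_le => x; rewrite /coupling /= ltr01 /deltaI.
by case: asboolP => _; rewrite ?sube0 ?addeNy ?leNye.
Qed.
End CouplingConjugate.

Section EcoDomain.
Context {R : realType} {X : tvsType R} (g : X -> \bar R).
Local Notation W := (W (R:=R) (X:=X)).
Hypothesis g_proper : proper_fun g.

Lemma cconj_fin_num u : domW (cconj g) u -> cconj g u \is a fin_num.
Proof.
move=> [_ lt]; have [[x gx] gNy] := g_proper.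
have : (-oo < coupling x u - g x)%E.
  move: (gNy x) gx; case: (g x) => // gr _ _.
  by rewrite /coupling; case: ifP => _ /=; rewrite ?ltNyr.
move=> /lt_le_trans /(_ (cconj_ub g u x)) gt.
by rewrite fin_numE gt_eqF // lt_eqF.
Qed.

Lemma coupling_dom x u : (g x < +oo)%E -> domW (cconj g) u ->
  coupling x u = (u.1.1 x)%:E.
Proof.
move=> gx Du; have := cconj_ub g u x; rewrite /coupling; case: ifP => // _.
move: (cconj_fin_num Du) (g_proper.2 x) gx.
by case: (cconj g u) => // k _; case: (g x).
Qed.

Lemma cconj_minorant u z : domW (cconj g) u ->
  (coupling z u - cconj g u <= g z)%E.
Proof.
move=> Du; have := cconj_ub g u z; move: (cconj_fin_num Du) (g_proper.2 z).
case: (cconj g u) => // k _; case: (g z) => [gz| |] // _; last by rewrite leey.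
by rewrite /coupling; case: ifP => // _; rewrite !lee_fin; lra.
Qed.

Lemma econvex_minorant_sep h x (y r : R) :
  econvex_fun h -> (forall z, (h z <= g z)%E) -> h x = y%:E -> r < y ->
  exists u, domW (cconj g) u /\ (r%:E <= coupling x u - cconj g u)%E.
Proof.
move=> hE hg hx ry; have [a [da sep]] := econvex_nonvertical_sep hE hx ry.
pose u : W := (a, 0, 1).
have cu z : coupling z u = (a z)%:E by rewrite /coupling ltr01.
have cg_le : (cconj g u <= (a x - r)%:E)%E.
  apply/cconj_le => z; rewrite cu; have := hg z.
  move: (g_proper.2 z); case: (g z) => [gz| |] // _ hz; last by rewrite leNye.
  by rewrite -EFinB lee_fin; apply/ltW/sep.
exists u; split.
  by split; [split; [exact: da | exact: is_dual0] | exact: le_lt_trans cg_le (ltry _)].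
rewrite cu; move: cg_le; case: (cconj g u) => [k| |] //=; last by rewrite leey.
by rewrite !lee_fin; lra.
Qed.

Lemma eco_le x : (eco g x <= g x)%E.
Proof. by apply: ge_ereal_sup => _ [h [_ hg] <-]. Qed.

Lemma eco_leP x : (g x < +oo)%E -> forall t,
  (eco g x <= t)%E <->
  forall u, domW (cconj g) u -> ((u.1.1 x - fine (cconj g u))%:E <= t)%E.
Proof.
move=> gx t; split=> [le u Du|H].
  rewrite EFinB fineK ?cconj_fin_num // -(coupling_dom gx Du).
  apply: le_trans le; apply: ereal_sup_ubound.
  exists (fun z => coupling z u - (fine (cconj g u))%:E)%E; last first.
    by rewrite fineK ?cconj_fin_num.
  split; first exact: econvex_coupling_sub Du.1.
  by move=> z; rewrite fineK ?cconj_fin_num //; exact: cconj_minorant.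
apply: ge_ereal_sup => _ [h [hE hg] <-].
have := le_lt_trans (hg x) gx; case Ehx: (h x) => [y| |] // _; last exact: leNye.
apply/lee_subgt0Pr => e e_gt0.
have [|u [Du le]] := econvex_minorant_sep hE hg Ehx (_ : y - e < y); first lra.
rewrite -EFinB; apply: le_trans le _.
by rewrite (coupling_dom gx Du) -(fineK (cconj_fin_num Du)) -EFinB; exact: H.
Qed.
End EcoDomain.

Section Main.
Context {R : realType} {X : tvsType R} (f g : X -> \bar R) (A : set X).
Local Notation W := (W (R:=R) (X:=X)).
Local Notation D := (domW (cconj g)).
Hypotheses (f_proper : proper_fun f) (g_proper : proper_fun g)
  (dom_fg : forall x, (f x < +oo)%E -> (g x < +oo)%E) (A0 : A !=set0).

Lemma diff_eco_neqNy x : diff_pinfty f (eco g) x != -oo%E.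
Proof.
rewrite /diff_pinfty; move: (f_proper.2 x) (@dom_fg x).
case: (f x) => [r| |] // _ /(_ (ltry r)) /(le_lt_trans (eco_le g x)).
by case: (eco g x).
Qed.

Lemma Lambda_pointwise x (C : \bar R) (t : R) : C != -oo%E ->
  (forall u, D u -> (C + (u.1.1 x)%:E - (f x + deltaI A x)
                       <= (t + fine (cconj g u))%:E)%E) <->
  (C - (diff_pinfty f (eco g) x + deltaI A x) <= t%:E)%E.
Proof.
move=> CNy; have fNy := gt_eqF (f_proper.2 x).
have [[Ax [r fxE]]|[-> ->]] : (A x /\ exists r, f x = r%:E) \/
    (f x + deltaI A x = +oo /\ diff_pinfty f (eco g) x + deltaI A x = +oo)%E.
- rewrite /deltaI; case: asboolP => Ax; last by right; rewrite !addey ?fNy ?diff_eco_neqNy.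
  rewrite !adde0 /diff_pinfty; case fxE: (f x) fNy => [r| |] // _; first by left; split=> //; exists r.
  by right.
- rewrite /deltaI asboolT // !adde0 /diff_pinfty fxE.
  have gx : (g x < +oo)%E by apply: dom_fg; rewrite fxE ltry.
  exact: (sup_dsub_le (phi := fun u => u.1.1 x) (eco_leP g_proper gx)).
- by split=> [_|_ u _]; rewrite addeNy leNye.
Qed.

Lemma Lambda_eq :
  Lambda f g A = epiW (cconj (fun x => diff_pinfty f (eco g) x + deltaI A x)%E).
Proof.
apply/seteqP; split=> -[[[a b] al] t] [iw H]; split=> //=.
  apply/cconj_le => x; apply/(Lambda_pointwise _ _ (coupling_neqNy _ _)) => u Du.
  by move: (H u Du); rewrite translate_epiW_cconj //; exact: Du.1.1.
move=> u Du; rewrite translate_epiW_cconj //; last exact: Du.1.1.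
by move/cconj_le: H => H x; apply: (Lambda_pointwise x t (coupling_neqNy _ _)).2.
Qed.

Lemma Omega_pointwise x (C cw : \bar R) (s t : R) : (exists u, D u) ->
  C != -oo%E -> cw != -oo%E ->
  (forall u, D u -> (C + (u.1.1 x)%:E - (f x - cw)
                       <= (t + (fine (cconj g u) - s))%:E)%E) <->
  (C - (diff_pinfty f (eco g) x - cw - s%:E) <= t%:E)%E.
Proof.
move=> [u0 Du0] CNy; case: cw => [c| |] // _; last first.
  (* for cw = +oo both sides fail, the left one only because dom g^c <> set0 *)
  split=> [/(_ u0 Du0)|] /=; last by rewrite !addeNy addNye /= addey.
  rewrite addeNy /= addey ?leye_eq //.
  by case: C CNy.
rewrite /diff_pinfty; case fxE: (f x) (f_proper.2 x) => [r| |] // _; last first.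
  by split=> [_|_ u _]; rewrite /= ?addeNy ?leNye.
have gx : (g x < +oo)%E by apply: dom_fg; rewrite fxE ltry.
have tE k : t + (k - s) = t - s + k by ring.
transitivity (forall u, D u -> (C + (u.1.1 x)%:E - (r - c)%:E
                                  <= (t - s + fine (cconj g u))%:E)%E).
  by split=> H u Du; have := H u Du; rewrite EFinB tE.
etransitivity; first exact: (sup_dsub_le (phi := fun u => u.1.1 x) (eco_leP g_proper gx)).
case: C CNy => [c'| |] // _; case: (eco g x) => [e| |] //=;
  rewrite ?lee_fin ?addeNy ?leNye //; split; lra.
Qed.

Lemma Omega_slice (a b : X -> R) (al t : R) (w : W) :
  (exists u, D u) -> inW (a, b, al) -> domW (cconj (deltaI A)) w ->
  (forall u, D u ->
     translate (epiW (cconj (fun x => f x - coupling x (- w.1.1, - w.1.2, w.2)%R)%E))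
               ((u.1.1, 0, 0), fine (cconj g u - cconj (deltaI A) w)%E)
               ((a, b, al), t)) <->
  epiW (cconj (fun x => diff_pinfty f (eco g) x
                       - coupling x (- w.1.1, - w.1.2, w.2)%R - cconj (deltaI A) w)%E)
       ((a, b, al), t).
Proof.
move=> Dne iw dw; pose s := fine (cconj (deltaI A) w).
have -> : cconj (deltaI A) w = s%:E by rewrite fineK ?cconj_deltaI_fin_num.
have fineE u : D u -> fine (cconj g u - s%:E) = fine (cconj g u) - s.
  by move=> Du; rewrite fineB ?cconj_fin_num.
split=> [H|[_ /cconj_le H] u Du]; last first.
  rewrite fineE // translate_epiW_cconj // => [x|]; last exact: Du.1.1.
  exact: (Omega_pointwise x s t Dne (coupling_neqNy _ _) (coupling_neqNy _ _)).2.
split=> //; apply/cconj_le => x.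
apply/(Omega_pointwise x s t Dne (coupling_neqNy _ _) (coupling_neqNy _ _)) => u Du.
by move: (H u Du); rewrite fineE // translate_epiW_cconj //; exact: Du.1.1.
Qed.

Lemma Omega_eq : (exists u, D u) -> Omega f g A = Omega_rhs f g A.
Proof.
move=> Dne; apply/seteqP; split=> -[[[a b] al] t] /=.
  by move=> [iw [w [dw H]]]; exists w; split=> //; apply/Omega_slice.
by move=> [w [dw [iw H]]]; split=> //; exists w; split=> //; apply/Omega_slice.
Qed.

Lemma Omega_eq_empty : ~ (exists u, D u) -> Omega f g A = Omega_rhs f g A.
Proof.
move=> D0.
have diff_oo x : diff_pinfty f (eco g) x = +oo%E.
  rewrite /diff_pinfty; move: (f_proper.2 x) (@dom_fg x).
  case: (f x) => [r| |] // _ /(_ (ltry r)) gx.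
  suff -> : eco g x = -oo%E by [].
  by apply/eqP; rewrite -leeNy_eq (eco_leP g_proper gx) => u Du; case: D0; exists u.
apply/seteqP; split=> -[[[a b] al] t] /=; last first.
  by move=> [w [dw [iw _]]]; split=> //; exists w; split=> // u Du; case: D0; exists u.
(* the coupling with (0, 0, 1) vanishes, so its conjugate is -oo *)
move=> [iw _]; exists (0, 0, 1); split; first exact: domW_cconj_deltaI.
split=> //; apply/cconj_le => x.
rewrite -(fineK (cconj_deltaI_fin_num A0 (domW_cconj_deltaI A))).
by rewrite diff_oo /coupling /= oppr0 ltr01 /= addeNy leNye.
Qed.
End Main.

Theorem proposition5p4 (R : realType) (X : tvsType R)
    (f g : X -> \bar R) (A : set X) :
  hausdorff_space X ->
  (exists x : X, x != 0) ->
  proper_fun f -> convex_fun f ->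
  proper_fun g -> convex_fun g ->
  (forall x, (f x < +oo)%E -> (g x < +oo)%E) ->
  A !=set0 ->
  Lambda f g A = epiW (cconj (fun x => diff_pinfty f (eco g) x + deltaI A x)%E) /\
  Omega f g A = Omega_rhs f g A.
Proof.
move=> _ _ f_proper _ g_proper _ dom_fg A0; split; first exact: Lambda_eq.
have [Dne|D0] := pselect (exists u, domW (cconj g) u).
  exact: Omega_eq.
exact: Omega_eq_empty.
Qed.
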